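(* Fix a real constant $c>-1$, let $\alpha\to\infty$ and put $\beta=\alpha-c$ (so that $\alpha>\beta-1>0$ for all sufficiently large $\alpha$). Then \[ \lim_{\alpha\to\infty}\alpha^{\frac{c+1}{2}}\,I(\alpha,\beta)=6^{\frac{c+1}{2}}\,\Gamma\!\left(\frac{c+1}{2}\right). \] In particular, \[ \lim_{\alpha\to\infty}\sqrt{\alpha}\,I(\alpha,\alpha)=\sqrt{6\pi}. \]
   Context: For real $\alpha,\beta$ with $\alpha>\beta-1>0$, $I(\alpha,\beta)=\int_{-\infty}^{\infty}|\sin t|^{\alpha}|t|^{-\beta}\,dt$; $\Gamma$ denotes the gamma function. *)

From Stdlib Require Import Reals Lra.
Open Scope R_scope.

(* Real power x^a for x >= 0 and a > 0, with the convention 0^a = 0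
   (Stdlib's Rpower 0 a = exp (a * ln 0) = 1, which is wrong here). *)
Definition rpow0 (x a : R) : R := if Req_EM_T x 0 then 0 else Rpower x a.

Definition is_RInt (f : R -> R) (a b v : R) : Prop :=
  exists pr : Riemann_integrable f a b, RiemannInt pr = v.

Definition is_improper_int_pos (f : R -> R) (l : R) : Prop :=
  forall eps : R, 0 < eps ->
  exists d M0 : R, 0 < d /\ 0 < M0 /\
  forall e M : R, 0 < e < d -> M0 < M ->
  exists v : R, is_RInt f e M v /\ Rabs (v - l) < eps.

(* Improper integral over the whole real line (singular points allowed at 0
   and at +-oo): int_{-oo}^{oo} f = int_0^oo f(t) dt + int_0^oo f(-t) dt. *)
Definition is_improper_int_R (f : R -> R) (l : R) : Prop :=
  exists l1 l2 : R,
    is_improper_int_pos f l1 /\ is_improper_int_pos (fun t => f (- t)) l2 /\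
    l = l1 + l2.

Definition I_integrand (alpha beta : R) (t : R) : R :=
  rpow0 (Rabs (sin t)) alpha * Rpower (Rabs t) (- beta).

Definition is_I (alpha beta v : R) : Prop :=
  is_improper_int_R (I_integrand alpha beta) v.

Definition is_Gamma (s G : R) : Prop :=
  is_improper_int_pos (fun t => Rpower t (s - 1) * exp (- t)) G.

From Stdlib Require Import Reals Lra FunctionalExtensionality.
From Coquelicot Require Import Coquelicot.
Open Scope R_scope.

(* For [0 < t <= 1], [ln (sin t / t) = - t^2/6 + O(t^4)], so the integrand
   [|sin t|^a t^(c-a) = t^c exp (a ln (sin t / t))] differs from the Gaussian
   [t^c exp (- a t^2 / 6)] by at most [t^c (exp (a t^4 / 18) - 1)] on [(0, tau]],
   with [tau^2 = 6 X / a]; beyond [tau] both are dominated by [t^c exp (- a t^2 / 12)],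
   and beyond [1] the bound [|sin t| <= 17 t / 20] makes the integrand at most
   [exp (- 3 a / 40) t^(c - a/2)].  The substitution [x = a t^2 / 6] turns the
   Gaussian integral into [Gamma (s) (6/a)^s / 2] with [s = (c+1)/2], and after
   scaling by [2 a^s] the three errors are [O(X^2/a)], [O(1/X)] and [O(1/a)]:
   choosing [X] and then [a] large gives the limit.  For [c = 0],
   [Gamma (1/2) = sqrt PI] follows from the Gaussian integral, which in turn comes
   from the vanishing derivative of
   [(int_0^x exp (-t^2))^2 + int_0^1 exp (- x^2 (1 + t^2)) / (1 + t^2) dt]. *)

Lemma continuous_R_of_ex_derive (f : R -> R) x : ex_derive f x -> continuous f x.
Proof. apply (ex_derive_continuous (K := R_AbsRing) (V := R_NormedModule)). Qed.

Lemma continuous_R_mult (f g : R -> R) x :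
  continuous f x -> continuous g x -> continuous (fun y => f y * g y) x.
Proof. exact (@continuous_mult R_UniformSpace R_AbsRing f g x). Qed.

Lemma continuous_R_comp (f g : R -> R) x :
  continuous f x -> continuous g (f x) -> continuous (fun y => g (f y)) x.
Proof. exact (@continuous_comp R_UniformSpace R_UniformSpace R_UniformSpace f g x). Qed.

Lemma Rpower_pos x p : 0 < Rpower x p.
Proof. apply exp_pos. Qed.

Lemma Rpower_0_r x : Rpower x 0 = 1.
Proof. unfold Rpower. rewrite Rmult_0_l. apply exp_0. Qed.

Lemma Rpower_1_l p : Rpower 1 p = 1.
Proof. unfold Rpower. rewrite ln_1, Rmult_0_r. apply exp_0. Qed.

Lemma Rpower_div x y p : 0 < x -> 0 < y -> Rpower (x / y) p = Rpower x p * Rpower y (- p).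
Proof.
  intros Hx Hy. unfold Rpower, Rdiv. rewrite ln_mult, ln_Rinv by (auto using Rinv_0_lt_compat).
  rewrite <- exp_plus. f_equal. ring.
Qed.

Lemma Rpower_pow2 t q : 0 < t -> Rpower (t ^ 2) q = Rpower t (2 * q).
Proof. intros Ht. unfold Rpower. rewrite ln_pow by exact Ht. f_equal. simpl. ring. Qed.

Lemma ex_derive_Rpower q x : 0 < x -> ex_derive (fun t => Rpower t q) x.
Proof. intros Hx. exists (q * Rpower x (q - 1)). now apply is_derive_Reals, derivable_pt_lim_power. Qed.

Definition continuous_pos (f : R -> R) := forall t, 0 < t -> continuous f t.

Lemma Rmin_pos_le a b x : 0 < a -> 0 < b -> Rmin a b <= x -> 0 < x.
Proof. intros Ha Hb H. pose proof (Rmin_glb_lt a b 0 Ha Hb). lra. Qed.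

Lemma ex_RInt_continuous_pos f a b : continuous_pos f -> 0 < a -> 0 < b -> ex_RInt f a b.
Proof.
  intros Hf Ha Hb. apply (ex_RInt_continuous (V := R_CompleteNormedModule)).
  intros z [Hz _]. apply Hf. exact (Rmin_pos_le a b z Ha Hb Hz).
Qed.

Lemma continuous_pos_Rpower q : continuous_pos (fun t => Rpower t q).
Proof. intros t Ht. now apply continuous_R_of_ex_derive, ex_derive_Rpower. Qed.

Lemma continuous_pos_scal k (f : R -> R) : continuous_pos f -> continuous_pos (fun t => k * f t).
Proof.
  intros Hf t Ht. apply continuous_R_mult; [apply continuous_const | now apply Hf].
Qed.

Lemma RInt_Chasles_R (f : R -> R) a b c :
  ex_RInt f a b -> ex_RInt f b c -> RInt f a b + RInt f b c = RInt f a c.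
Proof. exact (RInt_Chasles f a b c). Qed.

Lemma RInt_ext_R (f g : R -> R) a b :
  (forall x, Rmin a b < x < Rmax a b -> f x = g x) -> RInt f a b = RInt g a b.
Proof. exact (RInt_ext f g a b). Qed.

Lemma RInt_scal_R (f : R -> R) a b k : ex_RInt f a b -> RInt (fun x => k * f x) a b = k * RInt f a b.
Proof. exact (RInt_scal (V := R_CompleteNormedModule) f a b k). Qed.

Lemma RInt_le_pos (f g : R -> R) a b : 0 < a -> a <= b -> continuous_pos f -> continuous_pos g ->
  (forall x, a < x < b -> f x <= g x) -> RInt f a b <= RInt g a b.
Proof. intros Ha Hab Hf Hg H. apply RInt_le; auto; apply ex_RInt_continuous_pos; auto; lra. Qed.

Lemma RInt_ge0_pos (f : R -> R) a b : 0 < a -> a <= b -> continuous_pos f ->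
  (forall x, 0 < x -> 0 <= f x) -> 0 <= RInt f a b.
Proof.
  intros Ha Hab Hf H. apply RInt_ge_0; [lra | apply ex_RInt_continuous_pos; auto; lra |].
  intros x Hx. apply H. lra.
Qed.

Lemma RInt_Rpower q a b : 0 < a -> 0 < b -> q + 1 <> 0 ->
  RInt (fun t => Rpower t q) a b = (Rpower b (q + 1) - Rpower a (q + 1)) / (q + 1).
Proof.
  intros Ha Hb Hq. apply is_RInt_unique.
  replace ((Rpower b (q + 1) - Rpower a (q + 1)) / (q + 1))
    with (minus (/ (q + 1) * Rpower b (q + 1)) (/ (q + 1) * Rpower a (q + 1)))
    by (unfold minus, plus, opp; simpl; field; exact Hq).
  apply (is_RInt_derive (V := R_CompleteNormedModule) (fun t => / (q + 1) * Rpower t (q + 1))).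
  - intros x [Hx _]. pose proof (Rmin_pos_le a b x Ha Hb Hx) as Hx0.
    replace (Rpower x q) with (/ (q + 1) * ((q + 1) * Rpower x (q + 1 - 1)))
      by (replace (q + 1 - 1) with q by ring; field; exact Hq).
    apply is_derive_scal, is_derive_Reals, derivable_pt_lim_power, Hx0.
  - intros x [Hx _]. exact (continuous_pos_Rpower q x (Rmin_pos_le a b x Ha Hb Hx)).
Qed.

Lemma RInt_Rpower_le q e b : 0 < e -> e <= b -> 0 < q + 1 ->
  RInt (fun t => Rpower t q) e b <= Rpower b (q + 1) / (q + 1).
Proof.
  intros He Heb Hq. rewrite RInt_Rpower by lra. pose proof (Rpower_pos e (q + 1)).
  unfold Rdiv. apply Rmult_le_compat_r; [left; now apply Rinv_0_lt_compat | lra].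
Qed.

(** * Improper integrals over (0, oo) *)

(* [is_improper_int_pos] with Coquelicot's total [RInt] in place of integrability witnesses. *)
Definition is_RInt_0_oo (f : R -> R) (l : R) : Prop :=
  forall eps : R, 0 < eps ->
  exists d M0 : R, 0 < d /\
  forall e M : R, 0 < e < d -> M0 < M -> Rabs (RInt f e M - l) < eps.

Lemma is_improper_int_pos_of_RInt_0_oo f l :
  continuous_pos f -> is_RInt_0_oo f l -> is_improper_int_pos f l.
Proof.
  intros Hf H eps Heps. destruct (H eps Heps) as [d [M0 [Hd HM]]].
  exists d, (Rmax M0 1). split; [exact Hd | split; [pose proof (Rmax_r M0 1); lra |]].
  intros e M He HM0. pose proof (Rmax_l M0 1). pose proof (Rmax_r M0 1).
  assert (Hex : ex_RInt f e M) by (apply ex_RInt_continuous_pos; auto; lra).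
  exists (RInt f e M). split; [| apply HM; auto; lra].
  exists (ex_RInt_Reals_0 f e M Hex). symmetry. apply RInt_Reals.
Qed.

Lemma is_RInt_0_oo_of_improper f l : is_improper_int_pos f l -> is_RInt_0_oo f l.
Proof.
  intros H eps Heps. destruct (H eps Heps) as [d [M0 [Hd [_ HM]]]].
  exists d, M0. split; [exact Hd |]. intros e M He HM0.
  destruct (HM e M He HM0) as [v [[pr Hv] Hl]].
  rewrite (RInt_Reals f e M pr), Hv. exact Hl.
Qed.

Lemma is_RInt_0_oo_dist f g l m r :
  is_RInt_0_oo f l -> is_RInt_0_oo g m ->
  (exists d M0, 0 < d /\ forall e M, 0 < e < d -> M0 < M -> Rabs (RInt f e M - RInt g e M) <= r) ->
  Rabs (l - m) <= r.
Proof.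
  intros Hf Hg [d [M0 [Hd Hfg]]]. apply Rle_plus_epsilon. intros eps Heps.
  destruct (Hf (eps / 2) ltac:(lra)) as [d1 [M1 [Hd1 H1]]].
  destruct (Hg (eps / 2) ltac:(lra)) as [d2 [M2 [Hd2 H2]]].
  set (e := Rmin d (Rmin d1 d2) / 2). set (M := Rmax M0 (Rmax M1 M2) + 1).
  assert (He : 0 < Rmin d (Rmin d1 d2)) by (repeat apply Rmin_glb_lt; auto).
  pose proof (Rmin_l d (Rmin d1 d2)). pose proof (Rmin_r d (Rmin d1 d2)).
  pose proof (Rmin_l d1 d2). pose proof (Rmin_r d1 d2).
  pose proof (Rmax_l M0 (Rmax M1 M2)). pose proof (Rmax_r M0 (Rmax M1 M2)).
  pose proof (Rmax_l M1 M2). pose proof (Rmax_r M1 M2).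
  specialize (H1 e M ltac:(unfold e; lra) ltac:(unfold M; lra)).
  specialize (H2 e M ltac:(unfold e; lra) ltac:(unfold M; lra)).
  specialize (Hfg e M ltac:(unfold e; lra) ltac:(unfold M; lra)).
  replace (l - m) with (- (RInt f e M - l) + (RInt f e M - RInt g e M) + (RInt g e M - m)) by ring.
  eapply Rle_trans; [apply Rabs_triang|]. rewrite <- (Rabs_Ropp (RInt f e M - l)) in H1.
  pose proof (Rabs_triang (- (RInt f e M - l)) (RInt f e M - RInt g e M)). lra.
Qed.

Lemma is_RInt_0_oo_unique f l m : is_RInt_0_oo f l -> is_RInt_0_oo f m -> l = m.
Proof.
  intros Hl Hm. assert (H : Rabs (l - m) <= 0).
  { apply (is_RInt_0_oo_dist f f); auto. exists 1, 0. split; [lra |].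
    intros e M _ _. rewrite Rminus_diag, Rabs_R0. lra. }
  pose proof (Rabs_pos (l - m)). apply Rminus_diag_uniq, Rabs_eq_0. lra.
Qed.

Lemma RInt_le_wider f e e1 M1 M : continuous_pos f -> (forall t, 0 < t -> 0 <= f t) ->
  0 < e -> e <= e1 -> e1 <= M1 -> M1 <= M -> RInt f e1 M1 <= RInt f e M.
Proof.
  intros Hc Hp H1 H2 H3 H4.
  rewrite <- (RInt_Chasles_R f e e1 M), <- (RInt_Chasles_R f e1 M1 M)
    by (apply ex_RInt_continuous_pos; auto; lra).
  pose proof (RInt_ge0_pos f e e1 H1 H2 Hc Hp). pose proof (RInt_ge0_pos f M1 M ltac:(lra) H4 Hc Hp).
  lra.
Qed.

(* The nonnegative integrand makes [RInt f e M] monotone in the interval, so the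
   improper integral is the supremum of the proper ones. *)
Lemma is_RInt_0_oo_of_bounded f B1 B2 : continuous_pos f -> (forall t, 0 < t -> 0 <= f t) ->
  (forall e, 0 < e <= 1 -> RInt f e 1 <= B1) -> (forall M, 1 <= M -> RInt f 1 M <= B2) ->
  exists l, is_RInt_0_oo f l.
Proof.
  intros Hc Hp H1 H2.
  set (E := fun y => exists e M, 0 < e <= 1 /\ 1 <= M /\ y = RInt f e M).
  assert (Hb : bound E).
  { exists (B1 + B2). intros y [e [M [He [HM ->]]]].
    rewrite <- (RInt_Chasles_R f e 1 M) by (apply ex_RInt_continuous_pos; auto; lra).
    pose proof (H1 e He). pose proof (H2 M HM). lra. }
  assert (Hne : exists y, E y) by (exists (RInt f 1 1), 1, 1; repeat split; lra).
  destruct (completeness E Hb Hne) as [l [Hub Hlub]].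
  exists l. intros eps Heps.
  assert (Hex : exists e1 M1, 0 < e1 <= 1 /\ 1 <= M1 /\ l - eps < RInt f e1 M1).
  { apply Classical_Prop.NNPP. intros Hn. assert (l <= l - eps); [| lra].
    apply Hlub. intros y [e [M [He [HM ->]]]]. apply Rnot_lt_le. intros Hl.
    apply Hn. exists e, M. auto. }
  destruct Hex as [e1 [M1 [He1 [HM1 Hl1]]]].
  exists e1, M1. split; [lra |]. intros e M He HM.
  assert (RInt f e1 M1 <= RInt f e M) by (apply RInt_le_wider; auto; lra).
  assert (RInt f e M <= l) by (apply Hub; exists e, M; repeat split; lra).
  apply Rabs_def1; lra.
Qed.

Lemma exp_le x y : x <= y -> exp x <= exp y.
Proof. intros [H|H]; [left; now apply exp_increasing | subst; lra]. Qed.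

Lemma exp_le_inv x y : exp x <= exp y -> x <= y.
Proof.
  intros H. destruct (Rle_dec x y) as [|Hn]; auto.
  assert (exp y < exp x) by (apply exp_increasing; lra). lra.
Qed.

(* [ln (y/p) <= y/p], i.e. [p ln (p/y) >= -y]. *)
Lemma exp_neg_le_Rpower y p : 0 < y -> 0 < p -> exp (- y) <= Rpower (p / y) p.
Proof.
  intros Hy Hp. unfold Rpower. apply exp_le.
  assert (H : ln (y / p) <= y / p).
  { apply exp_le_inv. rewrite exp_ln by (apply Rdiv_lt_0_compat; lra).
    pose proof (exp_ineq1_le (y / p)). lra. }
  replace (ln (p / y)) with (- ln (y / p)).
  2:{ replace (p / y) with (/ (y / p)) by (field; lra).
      rewrite ln_Rinv; [ring | apply Rdiv_lt_0_compat; lra]. }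
  assert (p * ln (y / p) <= p * (y / p)) by (apply Rmult_le_compat_l; lra).
  replace (p * (y / p)) with y in * by (field; lra). lra.
Qed.

Lemma abs_exp_sub1_le u W : Rabs u <= W -> Rabs (exp u - 1) <= exp W - 1.
Proof.
  intros H. assert (HW : exp (Rabs u) <= exp W) by now apply exp_le.
  pose proof (exp_ineq1_le u). pose proof (exp_ineq1_le (- u)).
  destruct (Rle_dec 0 u).
  - rewrite Rabs_pos_eq in HW by lra. rewrite Rabs_pos_eq; lra.
  - rewrite Rabs_left in HW by lra.
    assert (exp u <= 1) by (rewrite <- exp_0; apply exp_le; lra).
    rewrite Rabs_left1; lra.
Qed.

Lemma exp_sub1_le x : 0 <= x <= 1/2 -> exp x - 1 <= 2 * x.
Proof.
  intros Hx. pose proof (exp_ineq1_le (- x)) as H. rewrite exp_Ropp in H.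
  pose proof (exp_pos x).
  assert (exp x * (1 - x) <= 1).
  { apply (Rmult_le_compat_l (exp x)) in H; [| lra]. rewrite Rinv_r in H by lra. lra. }
  nra.
Qed.

Lemma PI_gt_3 : 3 < PI.
Proof. pose proof PI2_3_2. lra. Qed.

Lemma sin_taylor_bounds t : 0 <= t <= PI ->
  t - t^3/6 + t^5/120 - t^7/5040 <= sin t <= t - t^3/6 + t^5/120 - t^7/5040 + t^9/362880.
Proof.
  intros Ht. destruct (SIN t) as [H1 H2]; try lra.
  unfold sin_lb, sin_ub, sin_approx, sin_term in *. cbn [sum_f_R0 Nat.mul Nat.add] in *.
  rewrite !fact_simpl, !mult_INR in *. simpl in *.
  split; [eapply Rle_trans; [|exact H1] | eapply Rle_trans; [exact H2|]]; right; field.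
Qed.

Lemma sin_bounds_01 t : 0 < t <= 1 -> t - t^3/6 <= sin t <= t - t^3/6 + t^5/120.
Proof.
  intros Ht. pose proof PI_gt_3. destruct (sin_taylor_bounds t) as [H1 H2]; [lra |].
  assert (Htt : t * t <= 1) by nra.
  assert (Hshrink : forall n, t ^ (n + 2) <= t ^ n).
  { intros n. rewrite pow_add. apply Rle_trans with (t ^ n * 1); [| lra].
    apply Rmult_le_compat_l; [apply pow_le; lra | simpl; lra]. }
  assert (t^7 <= t^5) by apply (Hshrink 5%nat).
  assert (t^9 <= t^7) by apply (Hshrink 7%nat).
  assert (0 <= t^9) by (apply pow_le; lra).
  split; lra.
Qed.

Lemma abs_sin_le_tail t : 1 <= t -> Rabs (sin t) <= 17/20 * t.
Proof.
  intros Ht. pose proof PI_gt_3.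
  destruct (Rle_dec t (20/17)).
  - assert (0 < sin t) by (apply sin_gt_0; lra). rewrite Rabs_pos_eq by lra.
    destruct (sin_taylor_bounds t) as [_ H2]; [lra |].
    set (u := t * t). assert (Hu : 1 <= u <= 7/5) by (unfold u; split; nra).
    replace (t - t^3/6 + t^5/120 - t^7/5040 + t^9/362880)
      with (t * (1 - u/6 + u*u/120 - u*u*u/5040 + u*u*u*u/362880)) in H2 by (unfold u; field).
    assert (1 - u/6 + u*u/120 - u*u*u/5040 + u*u*u*u/362880 <= 17/20).
    { assert (u*u <= 7/5*u) by nra. assert (0 <= u*u*u) by (apply Rmult_le_pos; nra).
      assert (u*u*u*u <= 4) by nra. lra. }
    nra.
  - pose proof (SIN_bound t). apply Rabs_le in H0. lra.
Qed.

Lemma ln_sin_div_le t : 0 < t <= 1 -> ln (sin t / t) <= - t^2/6 + t^4/120.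
Proof.
  intros Ht. destruct (sin_bounds_01 t Ht) as [H1 H2].
  assert (Hp : 0 < sin t / t).
  { apply Rdiv_lt_0_compat; [| lra].
    assert (t^3 <= t) by (replace (t^3) with (t * (t * t)) by ring; nra). lra. }
  apply exp_le_inv. rewrite exp_ln by exact Hp.
  eapply Rle_trans; [| apply exp_ineq1_le].
  apply (Rmult_le_reg_r t); [lra |]. unfold Rdiv at 1.
  rewrite Rmult_assoc, Rinv_l, Rmult_1_r by lra. lra.
Qed.

(* With [u = t^2/6]: [ln (1 - u) >= - u / (1 - u) >= - u - 2 u^2]. *)
Lemma ln_sin_div_ge t : 0 < t <= 1 -> - t^2/6 - t^4/18 <= ln (sin t / t).
Proof.
  intros Ht. destruct (sin_bounds_01 t Ht) as [H1 H2].
  set (u := t^2/6).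
  assert (Hu : 0 < u <= 1/6) by (unfold u; split; [apply Rdiv_lt_0_compat; [apply pow_lt|] |]; nra).
  assert (Hy : 1 - u <= sin t / t).
  { apply (Rmult_le_reg_r t); [lra |]. unfold Rdiv.
    rewrite Rmult_assoc, Rinv_l, Rmult_1_r by lra. unfold u. lra. }
  assert (Hl : - (u / (1 - u)) <= ln (1 - u)).
  { apply exp_le_inv. rewrite exp_ln, exp_Ropp by lra.
    pose proof (exp_ineq1_le (u / (1 - u))) as H.
    replace (1 + u / (1 - u)) with (/ (1 - u)) in H by (field; lra).
    replace (1 - u) with (/ / (1 - u)) at 2 by (field; lra).
    apply Rinv_le_contravar; [apply Rinv_0_lt_compat; lra | exact H]. }
  assert (u / (1 - u) <= u + 2 * u^2).
  { apply (Rmult_le_reg_r (1 - u)); [lra |]. unfold Rdiv.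
    rewrite Rmult_assoc, Rinv_l, Rmult_1_r by lra. nra. }
  assert (ln (1 - u) <= ln (sin t / t)) by (apply ln_le; lra).
  unfold u in *. replace (t^4/18) with (2 * (t^2/6)^2) by (simpl; field). lra.
Qed.

Lemma ln_abs_sin_div_le_tail t : 1 <= t -> sin t <> 0 -> ln (Rabs (sin t) / t) <= - (3/40) - ln t / 2.
Proof.
  intros Ht Hs.
  assert (Hp : 0 < Rabs (sin t) / t) by (apply Rdiv_lt_0_compat; [apply Rabs_pos_lt |]; auto; lra).
  assert (H1 : ln (Rabs (sin t) / t) <= ln (17/20)).
  { apply ln_le; auto. apply (Rmult_le_reg_r t); [lra |]. unfold Rdiv.
    rewrite Rmult_assoc, Rinv_l, Rmult_1_r by lra. pose proof (abs_sin_le_tail t Ht). lra. }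
  assert (H2 : ln (Rabs (sin t) / t) <= ln (/ t)).
  { apply ln_le; auto. unfold Rdiv. pose proof (SIN_bound t).
    rewrite <- (Rmult_1_l (/ t)) at 2. apply Rmult_le_compat_r; [left; apply Rinv_0_lt_compat; lra |].
    apply Rabs_le; lra. }
  assert (H3 : ln (17/20) <= - (3/20)).
  { apply exp_le_inv. rewrite exp_ln by lra. pose proof (exp_ineq1_le (- (3/20))). lra. }
  rewrite ln_Rinv in H2 by lra. lra.
Qed.

(** * The Gamma integral and Gaussian moments *)

Lemma sq_lt_of_lt_sqrt x y : 0 <= x -> x < sqrt y -> x ^ 2 < y.
Proof. intros Hx H. apply sqrt_lt_0_alt. now rewrite sqrt_pow2. Qed.

Lemma lt_sq_of_sqrt_lt x y : 0 <= x -> sqrt y < x -> y < x ^ 2.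
Proof. intros Hx H. apply sqrt_lt_0_alt. now rewrite sqrt_pow2. Qed.

Definition Gamma_integrand (s x : R) := Rpower x (s - 1) * exp (- x).

Definition gauss_power (c k t : R) := Rpower t c * exp (- (k * t ^ 2)).

Lemma continuous_pos_Gamma_integrand s : continuous_pos (Gamma_integrand s).
Proof.
  intros t Ht. apply continuous_R_mult; [now apply continuous_pos_Rpower |].
  apply continuous_R_of_ex_derive. auto_derive. exact I.
Qed.

Lemma continuous_pos_gauss_power c k : continuous_pos (gauss_power c k).
Proof.
  intros t Ht. apply continuous_R_mult; [now apply continuous_pos_Rpower |].
  apply continuous_R_of_ex_derive. auto_derive. exact I.
Qed.

Lemma gauss_power_ge0 c k t : 0 <= gauss_power c k t.
Proof. apply Rmult_le_pos; left; [apply Rpower_pos | apply exp_pos]. Qed.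

Lemma gauss_power_le_antimono c k k' t : k' <= k -> gauss_power c k t <= gauss_power c k' t.
Proof.
  intros Hk. apply Rmult_le_compat_l; [left; apply Rpower_pos |]. apply exp_le.
  assert (0 <= t ^ 2) by (rewrite <- Rsqr_pow2; apply Rle_0_sqr). nra.
Qed.

Lemma RInt_Gamma_integrand_subst c k a b : 0 < k -> 0 < a -> 0 < b ->
  RInt (Gamma_integrand ((c + 1) / 2)) (k * a ^ 2) (k * b ^ 2)
  = 2 * Rpower k ((c + 1) / 2) * RInt (gauss_power c k) a b.
Proof.
  intros Hk Ha Hb. set (s := (c + 1) / 2).
  assert (Hpos : forall x, Rmin a b <= x <= Rmax a b -> 0 < x)
    by (intros x [Hx _]; exact (Rmin_pos_le a b x Ha Hb Hx)).
  rewrite <- (RInt_comp (V := R_CompleteNormedModule) (Gamma_integrand s)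
                (fun t => k * t ^ 2) (fun t => 2 * k * t)).
  - rewrite <- RInt_scal_R by (apply ex_RInt_continuous_pos; auto; apply continuous_pos_gauss_power).
    apply RInt_ext_R. intros x Hx. assert (Hx0 : 0 < x) by (apply Hpos; lra).
    change (scal (2 * k * x) (Gamma_integrand s (k * x ^ 2))) with
      (2 * k * x * Gamma_integrand s (k * x ^ 2)).
    unfold Gamma_integrand, gauss_power, Rpower.
    rewrite ln_mult, ln_pow by (auto; apply pow_lt; auto).
    rewrite <- (exp_ln k) at 1 by exact Hk. rewrite <- (exp_ln x) at 1 by exact Hx0.
    rewrite <- !exp_plus. unfold Rminus. rewrite !Rmult_assoc, <- !exp_plus.
    f_equal. f_equal. unfold s. simpl. field.
  - intros x Hx. apply continuous_pos_Gamma_integrand.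
    apply Rmult_lt_0_compat; [exact Hk | apply pow_lt, Hpos, Hx].
  - intros x Hx. split; [auto_derive; [exact I | ring] |].
    apply continuous_R_of_ex_derive. auto_derive. exact I.
Qed.

(* Near 0 the integrand is at most [x^(s-1)]; near oo, [exp (-x) <= (p/x)^p] with
   [p = s + 1] makes it at most [p^p x^(-2)]. *)
Lemma Gamma_integrable s : 0 < s -> exists G, is_RInt_0_oo (Gamma_integrand s) G.
Proof.
  intros Hs. set (p := s + 1).
  apply (is_RInt_0_oo_of_bounded (Gamma_integrand s) (1 / s) (Rpower p p)).
  - apply continuous_pos_Gamma_integrand.
  - intros t Ht. apply Rmult_le_pos; left; [apply Rpower_pos | apply exp_pos].
  - intros e He. apply Rle_trans with (RInt (fun x => Rpower x (s - 1)) e 1).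
    + apply RInt_le_pos; try lra; [apply continuous_pos_Gamma_integrand | apply continuous_pos_Rpower |].
      intros x Hx. unfold Gamma_integrand. rewrite <- (Rmult_1_r (Rpower x (s - 1))) at 2.
      apply Rmult_le_compat_l; [left; apply Rpower_pos |].
      rewrite <- exp_0. apply exp_le. lra.
    + eapply Rle_trans; [apply RInt_Rpower_le; lra |].
      replace (s - 1 + 1) with s by ring. rewrite Rpower_1_l. lra.
  - intros M HM. apply Rle_trans with (RInt (fun x => Rpower p p * Rpower x (-2)) 1 M).
    + apply RInt_le_pos; try lra.
      { apply continuous_pos_Gamma_integrand. }
      { apply continuous_pos_scal, continuous_pos_Rpower. }
      intros x Hx. unfold Gamma_integrand.
      assert (H1 : exp (- x) <= Rpower (p / x) p) by (apply exp_neg_le_Rpower; unfold p; lra).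
      rewrite Rpower_div in H1 by (unfold p; lra).
      apply Rle_trans with (Rpower x (s - 1) * (Rpower p p * Rpower x (- p))).
      * apply Rmult_le_compat_l; [left; apply Rpower_pos | exact H1].
      * right. rewrite Rmult_comm, Rmult_assoc, <- Rpower_plus.
        unfold p. do 3 f_equal. ring.
    + rewrite RInt_scal_R by (apply ex_RInt_continuous_pos; [apply continuous_pos_Rpower | lra | lra]).
      rewrite RInt_Rpower by lra. replace (-2 + 1) with (- (1)) by ring.
      rewrite Rpower_1_l, Rpower_Ropp, Rpower_1 by lra.
      assert (0 < / M) by (apply Rinv_0_lt_compat; lra).
      pose proof (Rpower_pos p p).
      replace ((/ M - 1) / - (1)) with (1 - / M) by (field; lra). nra.
Qed.

Lemma is_RInt_0_oo_gauss_power c k G : 0 < k ->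
  is_RInt_0_oo (Gamma_integrand ((c + 1) / 2)) G ->
  is_RInt_0_oo (gauss_power c k) (G / (2 * Rpower k ((c + 1) / 2))).
Proof.
  intros Hk HG eps Heps. set (K := 2 * Rpower k ((c + 1) / 2)).
  assert (HK : 0 < K) by (unfold K; pose proof (Rpower_pos k ((c + 1) / 2)); lra).
  destruct (HG (K * eps) ltac:(nra)) as [dG [MG [HdG HGb]]].
  exists (sqrt (dG / k)), (Rmax 0 (sqrt (MG / k))).
  split; [apply sqrt_lt_R0, Rdiv_lt_0_compat; lra |]. intros e M He HM.
  pose proof (Rmax_l 0 (sqrt (MG / k))). pose proof (Rmax_r 0 (sqrt (MG / k))).
  assert (He2 : e ^ 2 < dG / k) by (apply sq_lt_of_lt_sqrt; lra).
  assert (HM2 : MG / k < M ^ 2) by (apply lt_sq_of_sqrt_lt; lra).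
  specialize (HGb (k * e ^ 2) (k * M ^ 2)).
  rewrite RInt_Gamma_integrand_subst in HGb by lra. fold K in HGb.
  replace (RInt (gauss_power c k) e M - G / K) with ((K * RInt (gauss_power c k) e M - G) / K)
    by (field; lra).
  unfold Rdiv. rewrite Rabs_mult, Rabs_inv, (Rabs_pos_eq K) by lra.
  apply (Rmult_lt_reg_r K); [exact HK |]. rewrite Rmult_assoc, Rinv_l, Rmult_1_r by lra.
  rewrite (Rmult_comm eps). apply HGb.
  - split; [apply Rmult_lt_0_compat, pow_lt | apply (Rmult_lt_compat_l k) in He2]; try lra.
    replace (k * (dG / k)) with dG in He2 by (field; lra). exact He2.
  - apply (Rmult_lt_compat_l k) in HM2; [| exact Hk].
    replace (k * (MG / k)) with MG in HM2 by (field; lra). exact HM2.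
Qed.

(* [t^c exp (-k t^2) <= (p/k)^p t^(-3)] for [p = (c + 3)/2]. *)
Lemma RInt_gauss_power_le c k tau b : 0 < k -> -1 < c -> 0 < tau -> tau <= b ->
  RInt (gauss_power c k) tau b <= Rpower ((c + 3) / 2 / k) ((c + 3) / 2) / (2 * tau ^ 2).
Proof.
  intros Hk Hc Ht Hb. set (p := (c + 3) / 2). set (C := Rpower (p / k) p).
  assert (HC : 0 < C) by apply Rpower_pos.
  apply Rle_trans with (RInt (fun t => C * Rpower t (-3)) tau b).
  - apply RInt_le_pos; auto.
    { apply continuous_pos_gauss_power. }
    { apply continuous_pos_scal, continuous_pos_Rpower. }
    intros t [Ht1 _]. assert (Ht0 : 0 < t) by lra. unfold gauss_power.
    assert (Hq : 0 < k * t ^ 2) by (apply Rmult_lt_0_compat, pow_lt; lra).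
    pose proof (exp_neg_le_Rpower _ p Hq ltac:(unfold p; lra)) as H1.
    replace (p / (k * t ^ 2)) with (p / k / t ^ 2) in H1 by (field; lra).
    assert (0 < p / k) by (apply Rdiv_lt_0_compat; unfold p; lra).
    rewrite Rpower_div, Rpower_pow2 in H1 by (try apply pow_lt; lra).
    apply Rle_trans with (Rpower t c * (C * Rpower t (2 * - p))).
    + apply Rmult_le_compat_l; [left; apply Rpower_pos | exact H1].
    + right. rewrite Rmult_comm, Rmult_assoc, <- Rpower_plus.
      unfold p. do 3 f_equal. field.
  - rewrite RInt_scal_R by (apply ex_RInt_continuous_pos; [apply continuous_pos_Rpower | lra | lra]).
    rewrite RInt_Rpower by lra. replace (-3 + 1) with (- (2)) by ring.
    assert (Hsq : forall x, 0 < x -> Rpower x 2 = x ^ 2)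
      by (intros x Hx; rewrite <- (Rpower_pow 2 x Hx); f_equal; simpl; ring).
    rewrite !Rpower_Ropp, !Hsq by lra.
    assert (0 < b ^ 2) by (apply pow_lt; lra). assert (0 < tau ^ 2) by (apply pow_lt; lra).
    assert (0 < C * / b ^ 2) by (apply Rmult_lt_0_compat; [lra | apply Rinv_0_lt_compat; lra]).
    replace (C * ((/ b ^ 2 - / tau ^ 2) / - (2))) with (C / (2 * tau ^ 2) - C * / b ^ 2 / 2)
      by (field; lra).
    lra.
Qed.

(** * The integrand of I *)

Lemma rpow0_pos x a : 0 < x -> rpow0 x a = Rpower x a.
Proof. intros Hx. unfold rpow0. destruct (Req_EM_T x 0); [lra | reflexivity]. Qed.

Lemma continuous_rpow0_abs a y0 : 0 < a -> continuous (fun y => rpow0 (Rabs y) a) y0.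
Proof.
  intros Ha. destruct (Req_dec y0 0) as [-> | Hy0].
  - apply continuity_pt_filterlim. intros eps Heps.
    exists (Rpower eps (/ a)). split; [apply Rpower_pos |]. intros x [_ Hx].
    simpl in *. unfold R_dist in *. rewrite Rminus_0_r in Hx.
    rewrite Rabs_R0. unfold rpow0 at 2. destruct (Req_EM_T 0 0) as [_ |]; [| lra].
    rewrite Rminus_0_r. unfold rpow0. destruct (Req_EM_T (Rabs x) 0); [rewrite Rabs_R0; lra |].
    assert (0 < Rabs x) by (pose proof (Rabs_pos x); lra).
    rewrite Rabs_pos_eq by (left; apply Rpower_pos).
    rewrite <- (Rpower_1 eps), <- (Rinv_l a), <- Rpower_mult by lra.
    now apply Rlt_Rpower_l.
  - apply (continuous_R_comp Rabs (fun z => rpow0 z a)); [apply continuous_Rabs |].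
    assert (Hy : 0 < Rabs y0) by now apply Rabs_pos_lt.
    apply (continuous_ext_loc _ (fun z => Rpower z a)); [| now apply continuous_pos_Rpower].
    apply (locally_interval _ _ (Finite 0) p_infty); [exact Hy | exact I |].
    intros z Hz _. symmetry. now apply rpow0_pos.
Qed.

Lemma continuous_pos_I_integrand a b : 0 < a -> continuous_pos (I_integrand a b).
Proof.
  intros Ha t Ht. apply continuous_R_mult.
  - apply (continuous_R_comp sin (fun y => rpow0 (Rabs y) a)); [apply continuous_sin |].
    now apply continuous_rpow0_abs.
  - apply (continuous_ext_loc _ (fun y => Rpower y (- b))); [| now apply continuous_pos_Rpower].
    apply (locally_interval _ _ (Finite 0) p_infty); [exact Ht | exact I |].
    intros y Hy _. simpl in Hy. now rewrite Rabs_pos_eq by lra.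
Qed.

Lemma I_integrand_ge0 a b t : 0 <= I_integrand a b t.
Proof.
  unfold I_integrand, rpow0. destruct (Req_EM_T (Rabs (sin t)) 0); [lra |].
  apply Rmult_le_pos; left; apply Rpower_pos.
Qed.

Lemma I_integrand_even a b : (fun t => I_integrand a b (- t)) = I_integrand a b.
Proof.
  apply functional_extensionality. intros t.
  unfold I_integrand. now rewrite sin_neg, !Rabs_Ropp.
Qed.

Section I_integrand_bounds.

Variables a c : R.
Hypothesis Ha : 0 < a.

Let f := I_integrand a (a - c).

Lemma I_integrand_pos_eq t : 0 < t -> sin t <> 0 ->
  f t = Rpower t c * exp (a * ln (Rabs (sin t) / t)).
Proof.
  intros Ht Hs. assert (Hs' : 0 < Rabs (sin t)) by now apply Rabs_pos_lt.
  unfold f, I_integrand. rewrite rpow0_pos, (Rabs_pos_eq t) by lra.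
  unfold Rpower. rewrite <- !exp_plus. f_equal.
  unfold Rdiv. rewrite ln_mult, ln_Rinv by (auto using Rinv_0_lt_compat). ring.
Qed.

Lemma I_integrand_eq_01 t : 0 < t <= 1 -> f t = Rpower t c * exp (a * ln (sin t / t)).
Proof.
  intros Ht. pose proof PI_gt_3. assert (Hs : 0 < sin t) by (apply sin_gt_0; lra).
  rewrite I_integrand_pos_eq, Rabs_pos_eq by lra. reflexivity.
Qed.

Lemma I_integrand_le_gauss t : 0 < t <= 1 -> f t <= gauss_power c (a / 12) t.
Proof.
  intros Ht. rewrite I_integrand_eq_01 by exact Ht.
  apply Rmult_le_compat_l; [left; apply Rpower_pos |]. apply exp_le.
  pose proof (ln_sin_div_le t Ht).
  assert (t ^ 4 / 120 <= t ^ 2 / 12).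
  { replace (t ^ 4) with (t ^ 2 * t ^ 2) by ring.
    assert (0 <= t ^ 2 <= 1) by (simpl; split; nra). nra. }
  assert (a * ln (sin t / t) <= a * (- (t ^ 2 / 12))) by (apply Rmult_le_compat_l; lra).
  lra.
Qed.

Lemma I_integrand_near_gauss t : 0 < t <= 1 ->
  Rabs (f t - gauss_power c (a / 6) t) <= Rpower t c * (exp (a * t ^ 4 / 18) - 1).
Proof.
  intros Ht. rewrite I_integrand_eq_01 by exact Ht. unfold gauss_power.
  set (u := a * ln (sin t / t) + a / 6 * t ^ 2).
  replace (a * ln (sin t / t)) with (- (a / 6 * t ^ 2) + u) by (unfold u; ring).
  rewrite exp_plus.
  replace (Rpower t c * (exp (- (a / 6 * t ^ 2)) * exp u) - Rpower t c * exp (- (a / 6 * t ^ 2)))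
    with (Rpower t c * (exp (- (a / 6 * t ^ 2)) * (exp u - 1))) by ring.
  assert (Hu : Rabs u <= a * t ^ 4 / 18).
  { pose proof (ln_sin_div_le t Ht). pose proof (ln_sin_div_ge t Ht).
    assert (0 <= t ^ 4) by (apply pow_le; lra).
    assert (a * ln (sin t / t) <= a * (- t ^ 2 / 6 + t ^ 4 / 120)) by (apply Rmult_le_compat_l; lra).
    assert (a * (- t ^ 2 / 6 - t ^ 4 / 18) <= a * ln (sin t / t)) by (apply Rmult_le_compat_l; lra).
    assert (0 <= a * t ^ 4) by (apply Rmult_le_pos; lra).
    unfold u. apply Rabs_le. split; lra. }
  pose proof (abs_exp_sub1_le u _ Hu).
  assert (He1 : exp (- (a / 6 * t ^ 2)) <= 1).
  { rewrite <- exp_0. apply exp_le. assert (0 <= t ^ 2) by (apply pow_le; lra).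
    assert (0 <= a / 6 * t ^ 2) by (apply Rmult_le_pos; lra). lra. }
  pose proof (Rpower_pos t c). pose proof (exp_pos (- (a / 6 * t ^ 2))).
  rewrite !Rabs_mult, (Rabs_pos_eq (Rpower t c)), (Rabs_pos_eq (exp _)) by lra.
  apply Rmult_le_compat_l; [lra |]. pose proof (Rabs_pos (exp u - 1)). nra.
Qed.

Lemma I_integrand_tail_le t : 1 <= t -> f t <= exp (- (3 * a / 40)) * Rpower t (c - a / 2).
Proof.
  intros Ht. destruct (Req_dec (sin t) 0) as [Hs | Hs].
  - unfold f, I_integrand, rpow0. rewrite Hs, Rabs_R0.
    destruct (Req_EM_T 0 0); [| lra]. rewrite Rmult_0_l.
    apply Rmult_le_pos; left; [apply exp_pos | apply Rpower_pos].
  - rewrite I_integrand_pos_eq by (auto; lra). unfold Rpower. rewrite <- !exp_plus.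
    apply exp_le. pose proof (ln_abs_sin_div_le_tail t Ht Hs).
    assert (a * ln (Rabs (sin t) / t) <= a * (- (3 / 40) - ln t / 2)) by (apply Rmult_le_compat_l; lra).
    lra.
Qed.

End I_integrand_bounds.

Lemma continuous_pos_abs_sub f g :
  continuous_pos f -> continuous_pos g -> continuous_pos (fun t => Rabs (f t - g t)).
Proof.
  intros Hf Hg t Ht. apply (continuous_R_comp (fun t => f t - g t) Rabs); [| apply continuous_Rabs].
  exact (@continuous_minus R_UniformSpace R_AbsRing R_NormedModule f g t (Hf t Ht) (Hg t Ht)).
Qed.

Section I_integrand_integrals.

Variables c a : R.
Hypothesis Hc : -1 < c.
Hypothesis Ha : 0 < a.

Let f := I_integrand a (a - c).

Let Hf : continuous_pos f := continuous_pos_I_integrand a (a - c) Ha.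

Lemma RInt_I_integrand_tail_le M : 1 <= M -> 2 * c + 4 <= a ->
  RInt f 1 M <= exp (- (3 * a / 40)).
Proof.
  intros HM Hac. set (K := exp (- (3 * a / 40))).
  apply Rle_trans with (RInt (fun t => K * Rpower t (c - a / 2)) 1 M).
  - apply RInt_le_pos; try lra; [exact Hf | apply continuous_pos_scal, continuous_pos_Rpower |].
    intros t Ht. apply I_integrand_tail_le; lra.
  - rewrite RInt_scal_R by (apply ex_RInt_continuous_pos; [apply continuous_pos_Rpower | lra | lra]).
    rewrite RInt_Rpower, Rpower_1_l by lra.
    set (q := c - a / 2 + 1). assert (Hq : q <= -1) by (unfold q; lra).
    pose proof (Rpower_pos M q). assert (HK : 0 < K) by apply exp_pos.
    assert ((Rpower M q - 1) / q <= 1).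
    { replace ((Rpower M q - 1) / q) with ((1 - Rpower M q) / - q) by (field; lra).
      apply (Rmult_le_reg_r (- q)); [lra |]. unfold Rdiv.
      rewrite Rmult_assoc, Rinv_l, Rmult_1_r by lra. lra. }
    nra.
Qed.

Lemma RInt_I_integrand_near_gauss e tau : 0 < e -> e <= tau -> tau <= 1 ->
  Rabs (RInt f e tau - RInt (gauss_power c (a / 6)) e tau)
  <= (exp (a * tau ^ 4 / 18) - 1) * (Rpower tau (c + 1) / (c + 1)).
Proof.
  intros He Het Ht1. set (K := exp (a * tau ^ 4 / 18) - 1).
  assert (HK : 0 <= K).
  { assert (0 <= a * tau ^ 4 / 18) by (apply Rmult_le_pos; [apply Rmult_le_pos, pow_le |]; lra).
    pose proof (exp_ineq1_le (a * tau ^ 4 / 18)). unfold K. lra. }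
  assert (Hg : continuous_pos (gauss_power c (a / 6))) by apply continuous_pos_gauss_power.
  rewrite <- (RInt_minus (V := R_CompleteNormedModule)) by (apply ex_RInt_continuous_pos; auto; lra).
  eapply Rle_trans.
  { apply abs_RInt_le; [exact Het |].
    apply (ex_RInt_minus (V := R_NormedModule)); apply ex_RInt_continuous_pos; auto; lra. }
  apply Rle_trans with (RInt (fun t => K * Rpower t c) e tau).
  - apply RInt_le_pos; auto.
    { exact (continuous_pos_abs_sub f _ Hf Hg). }
    { apply continuous_pos_scal, continuous_pos_Rpower. }
    intros t Ht. eapply Rle_trans; [apply I_integrand_near_gauss; lra |].
    rewrite Rmult_comm. apply Rmult_le_compat_r; [left; apply Rpower_pos |].
    unfold K. apply Rplus_le_compat_r, exp_le. unfold Rdiv.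
    apply Rmult_le_compat_r; [lra |]. apply Rmult_le_compat_l; [lra |]. apply pow_incr. lra.
  - rewrite RInt_scal_R by (apply ex_RInt_continuous_pos; [apply continuous_pos_Rpower | lra | lra]).
    apply Rmult_le_compat_l; [exact HK |]. apply RInt_Rpower_le; lra.
Qed.

(* Split [e, M] at [tau] and [1]: on [e, tau] compare with the Gaussian, while
   [f] and the Gaussian are both small on [tau, oo). *)
Lemma RInt_I_integrand_sub_gauss_le e tau M : 0 < e -> e <= tau -> tau <= 1 -> 1 <= M ->
  2 * c + 4 <= a ->
  Rabs (RInt f e M - RInt (gauss_power c (a / 6)) e M)
  <= (exp (a * tau ^ 4 / 18) - 1) * (Rpower tau (c + 1) / (c + 1))
     + 2 * (Rpower ((c + 3) / 2 / (a / 12)) ((c + 3) / 2) / (2 * tau ^ 2))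
     + exp (- (3 * a / 40)).
Proof.
  intros He Het Ht1 HM Hac.
  pose proof (RInt_I_integrand_near_gauss e tau He Het Ht1) as Hnear.
  set (g6 := gauss_power c (a / 6)) in *. set (g12 := gauss_power c (a / 12)).
  set (D := Rpower ((c + 3) / 2 / (a / 12)) ((c + 3) / 2) / (2 * tau ^ 2)).
  assert (Hg6 : continuous_pos g6) by apply continuous_pos_gauss_power.
  assert (Hg12 : continuous_pos g12) by apply continuous_pos_gauss_power.
  rewrite <- (RInt_Chasles_R f e tau M), <- (RInt_Chasles_R f tau 1 M),
    <- (RInt_Chasles_R g6 e tau M) by (apply ex_RInt_continuous_pos; auto; lra).
  assert (0 <= RInt f tau 1) by (apply RInt_ge0_pos; auto; try lra; intros; apply I_integrand_ge0).
  assert (RInt f tau 1 <= RInt g12 tau 1).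
  { apply RInt_le_pos; auto; try lra. intros t Ht. apply I_integrand_le_gauss; lra. }
  assert (RInt g12 tau 1 <= D) by (apply RInt_gauss_power_le; lra).
  assert (0 <= RInt f 1 M) by (apply RInt_ge0_pos; auto; try lra; intros; apply I_integrand_ge0).
  assert (RInt f 1 M <= exp (- (3 * a / 40))) by (apply RInt_I_integrand_tail_le; auto).
  assert (0 <= RInt g6 tau M) by (apply RInt_ge0_pos; auto; try lra; intros; apply gauss_power_ge0).
  assert (RInt g6 tau M <= RInt g12 tau M).
  { apply RInt_le_pos; auto; try lra. intros t _. apply gauss_power_le_antimono. lra. }
  assert (RInt g12 tau M <= D) by (apply RInt_gauss_power_le; lra).
  replace (RInt f e tau + (RInt f tau 1 + RInt f 1 M) - (RInt g6 e tau + RInt g6 tau M))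
    with ((RInt f e tau - RInt g6 e tau) + (RInt f tau 1 + RInt f 1 M - RInt g6 tau M)) by ring.
  eapply Rle_trans; [apply Rabs_triang |].
  assert (Rabs (RInt f tau 1 + RInt f 1 M - RInt g6 tau M) <= 2 * D + exp (- (3 * a / 40)))
    by (apply Rabs_le; split; lra).
  lra.
Qed.

Lemma I_integrand_integrable : 2 * c + 4 <= a -> exists J, is_RInt_0_oo f J.
Proof.
  intros Hac. apply (is_RInt_0_oo_of_bounded f (1 / (c + 1)) (exp (- (3 * a / 40)))).
  - exact Hf.
  - intros t _. apply I_integrand_ge0.
  - intros e He. apply Rle_trans with (RInt (fun t => Rpower t c) e 1).
    + apply RInt_le_pos; try lra; [exact Hf | apply continuous_pos_Rpower |].
      intros t Ht. eapply Rle_trans; [apply I_integrand_le_gauss; lra |].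
      unfold gauss_power. rewrite <- (Rmult_1_r (Rpower t c)) at 2.
      apply Rmult_le_compat_l; [left; apply Rpower_pos |]. rewrite <- exp_0. apply exp_le.
      assert (0 <= a / 12 * t ^ 2) by (apply Rmult_le_pos, pow_le; lra). lra.
    + eapply Rle_trans; [apply RInt_Rpower_le; lra |]. rewrite Rpower_1_l. lra.
  - intros M HM. now apply RInt_I_integrand_tail_le.
Qed.

End I_integrand_integrals.

Section I_integrand_error.

Variables c a X : R.
Hypothesis Hc : -1 < c.
Hypothesis HX : 0 < X.
Hypothesis Ha6 : 6 * X <= a.
Hypothesis Ha4 : 4 * X ^ 2 <= a.

Let s := (c + 1) / 2.
Let p := (c + 3) / 2.
(* The split point between the Gaussian regime and the tail. *)
Let tau := sqrt (6 * X / a).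

Let Ha : 0 < a.
Proof. lra. Qed.

Let Hs : 0 < s.
Proof. unfold s. lra. Qed.

Let Hp : p = s + 1.
Proof. unfold p, s. field. Qed.

Let tau_pos : 0 < tau.
Proof. apply sqrt_lt_R0, Rdiv_lt_0_compat; lra. Qed.

Let tau_sq : tau ^ 2 = 6 * X / a.
Proof. unfold tau. rewrite <- Rsqr_pow2. apply Rsqr_sqrt, Rlt_le, Rdiv_lt_0_compat; lra. Qed.

Let tau_le_1 : tau <= 1.
Proof.
  unfold tau. rewrite <- sqrt_1. apply sqrt_le_1_alt.
  apply (Rmult_le_reg_r a); [exact Ha |]. unfold Rdiv.
  rewrite Rmult_assoc, Rinv_l, Rmult_1_r by lra. lra.
Qed.

Lemma scaled_near_gauss_le :
  2 * Rpower a s * ((exp (a * tau ^ 4 / 18) - 1) * (Rpower tau (c + 1) / (c + 1)))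
  <= 4 * X ^ 2 * Rpower (6 * X) s / s / a.
Proof.
  replace (a * tau ^ 4 / 18) with (2 * X ^ 2 / a)
    by (replace (tau ^ 4) with ((tau ^ 2) ^ 2) by ring; rewrite tau_sq; field; lra).
  assert (Hexp : exp (2 * X ^ 2 / a) - 1 <= 2 * (2 * X ^ 2 / a)).
  { apply exp_sub1_le. split; [apply Rdiv_le_0_compat; [apply Rmult_le_pos, pow_le |] |]; try lra.
    apply (Rmult_le_reg_r a); [exact Ha |]. unfold Rdiv.
    rewrite Rmult_assoc, Rinv_l, Rmult_1_r by lra. lra. }
  replace (Rpower tau (c + 1)) with (Rpower (6 * X / a) s)
    by (unfold tau, s; rewrite <- Rpower_sqrt, Rpower_mult by (apply Rdiv_lt_0_compat; lra);
        f_equal; field).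
  replace (c + 1) with (2 * s) by (unfold s; field).
  replace (Rpower (6 * X) s) with (Rpower a s * Rpower (6 * X / a) s)
    by (rewrite (Rpower_mult_distr a (6 * X / a)) by (try apply Rdiv_lt_0_compat; lra);
        f_equal; field; lra).
  pose proof (Rpower_pos a s). pose proof (Rpower_pos (6 * X / a) s).
  apply (Rmult_le_reg_r a); [exact Ha |].
  replace (4 * X ^ 2 * (Rpower a s * Rpower (6 * X / a) s) / s / a * a)
    with (Rpower a s * Rpower (6 * X / a) s / s * a * (2 * (2 * X ^ 2 / a))) by (field; lra).
  replace (2 * Rpower a s * ((exp (2 * X ^ 2 / a) - 1) * (Rpower (6 * X / a) s / (2 * s))) * a)
    with (Rpower a s * Rpower (6 * X / a) s / s * a * (exp (2 * X ^ 2 / a) - 1)) by (field; lra).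
  apply Rmult_le_compat_l; [| exact Hexp].
  apply Rmult_le_pos; [apply Rdiv_le_0_compat |]; try apply Rmult_le_pos; lra.
Qed.

Lemma scaled_gauss_tail_eq :
  2 * Rpower a s * (2 * (Rpower (p / (a / 12)) p / (2 * tau ^ 2)))
  = Rpower (12 * p) p / (3 * X).
Proof.
  rewrite tau_sq. replace (p / (a / 12)) with (12 * p / a) by (field; lra).
  rewrite Rpower_div by (unfold p; lra).
  replace (2 * Rpower a s * (2 * (Rpower (12 * p) p * Rpower a (- p) / (2 * (6 * X / a)))))
    with (Rpower (12 * p) p * (Rpower a s * Rpower a (- p) * a) / (3 * X)) by (field; lra).
  rewrite <- Rpower_plus. rewrite <- (Rpower_1 a) at 2 by exact Ha. rewrite <- Rpower_plus, Hp.
  replace (s + - (s + 1) + 1) with 0 by ring. rewrite Rpower_0_r. field. lra.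
Qed.

Lemma scaled_I_tail_le : 2 * Rpower a s * exp (- (3 * a / 40)) <= 2 * Rpower (40 * p / 3) p / a.
Proof.
  pose proof (exp_neg_le_Rpower (3 * a / 40) p ltac:(lra) ltac:(unfold p; lra)) as H.
  replace (p / (3 * a / 40)) with (40 * p / 3 / a) in H by (field; lra).
  rewrite Rpower_div in H by (unfold p; lra).
  pose proof (Rpower_pos a s).
  apply Rle_trans with (2 * Rpower a s * (Rpower (40 * p / 3) p * Rpower a (- p)));
    [apply Rmult_le_compat_l; lra |].
  right. replace (2 * Rpower a s * (Rpower (40 * p / 3) p * Rpower a (- p)))
    with (2 * Rpower (40 * p / 3) p * (Rpower a s * Rpower a (- p))) by ring.
  rewrite <- Rpower_plus, Hp. replace (s + - (s + 1)) with (- (1)) by ring.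
  rewrite Rpower_Ropp, Rpower_1 by exact Ha. field. lra.
Qed.

Lemma I_integrand_error J G : 2 * c + 4 <= a ->
  is_RInt_0_oo (I_integrand a (a - c)) J -> is_RInt_0_oo (Gamma_integrand s) G ->
  Rabs (2 * Rpower a s * J - Rpower 6 s * G)
  <= (4 * X ^ 2 * Rpower (6 * X) s / s + 2 * Rpower (40 * p / 3) p) / a
     + Rpower (12 * p) p / (3 * X).
Proof.
  intros Hac HJ HG.
  assert (Hgauss := is_RInt_0_oo_gauss_power c (a / 6) G ltac:(lra) HG).
  set (B := (exp (a * tau ^ 4 / 18) - 1) * (Rpower tau (c + 1) / (c + 1))
            + 2 * (Rpower (p / (a / 12)) p / (2 * tau ^ 2)) + exp (- (3 * a / 40))).
  assert (HJm : Rabs (J - G / (2 * Rpower (a / 6) s)) <= B).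
  { apply (is_RInt_0_oo_dist _ _ _ _ _ HJ Hgauss). exists tau, 1. split; [exact tau_pos |].
    intros e M He HM. apply RInt_I_integrand_sub_gauss_le; lra. }
  assert (Ha6s : Rpower 6 s * Rpower (a / 6) s = Rpower a s)
    by (rewrite Rpower_mult_distr by lra; f_equal; field).
  pose proof (Rpower_pos a s) as Has. pose proof (Rpower_pos (a / 6) s).
  replace (2 * Rpower a s * J - Rpower 6 s * G)
    with (2 * Rpower a s * (J - G / (2 * Rpower (a / 6) s)))
    by (rewrite <- Ha6s; field; lra).
  rewrite Rabs_mult, Rabs_pos_eq by lra.
  apply Rle_trans with (2 * Rpower a s * B); [apply Rmult_le_compat_l; lra |].
  unfold B. rewrite !Rmult_plus_distr_l.
  pose proof scaled_near_gauss_le. pose proof scaled_gauss_tail_eq. pose proof scaled_I_tail_le.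
  unfold Rdiv in *. lra.
Qed.

End I_integrand_error.

Lemma is_I_of_RInt_0_oo a b J : 0 < a -> is_RInt_0_oo (I_integrand a b) J -> is_I a b (2 * J).
Proof.
  intros Ha HJ. pose proof (continuous_pos_I_integrand a b Ha) as Hf.
  exists J, J. rewrite I_integrand_even.
  split; [| split]; [now apply is_improper_int_pos_of_RInt_0_oo .. | ring].
Qed.

Lemma is_I_unique a b J v : is_RInt_0_oo (I_integrand a b) J -> is_I a b v -> v = 2 * J.
Proof.
  intros HJ [l1 [l2 [H1 [H2 ->]]]]. rewrite I_integrand_even in H2.
  apply is_RInt_0_oo_of_improper in H1, H2.
  rewrite (is_RInt_0_oo_unique _ _ _ H1 HJ), (is_RInt_0_oo_unique _ _ _ H2 HJ). ring.
Qed.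

Lemma div_le_of_large C X eps : 0 < eps -> 0 < X -> 4 * C / eps <= X -> C / X <= eps / 4.
Proof.
  intros Heps HX H. apply (Rmult_le_reg_r X); [exact HX |]. unfold Rdiv at 1.
  rewrite Rmult_assoc, Rinv_l, Rmult_1_r by lra.
  apply (Rmult_le_compat_l (eps / 4)) in H; [| lra].
  replace (eps / 4 * (4 * C / eps)) with C in H by (field; lra). lra.
Qed.

(* Choose [X] to make the [1/X] error small, then [a] to make the [1/a] error small. *)
Lemma I_shift_limit c G : -1 < c -> is_RInt_0_oo (Gamma_integrand ((c + 1) / 2)) G ->
  forall eps, 0 < eps -> exists A, forall a J, A < a ->
  is_RInt_0_oo (I_integrand a (a - c)) J ->
  Rabs (2 * Rpower a ((c + 1) / 2) * J - Rpower 6 ((c + 1) / 2) * G) < eps.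
Proof.
  intros Hc HG eps Heps. set (s := (c + 1) / 2). set (p := (c + 3) / 2).
  assert (Hs : 0 < s) by (unfold s; lra).
  set (C2 := Rpower (12 * p) p / 3). set (X := Rmax 1 (4 * C2 / eps)).
  assert (HX1 : 1 <= X) by apply Rmax_l. assert (HX2 : 4 * C2 / eps <= X) by apply Rmax_r.
  set (C1 := 4 * X ^ 2 * Rpower (6 * X) s / s + 2 * Rpower (40 * p / 3) p).
  set (A := Rmax (Rmax (6 * X) (4 * X ^ 2)) (Rmax (2 * c + 4) (4 * C1 / eps))).
  exists A. intros a J Ha HJ. unfold A in Ha.
  pose proof (Rmax_l (Rmax (6 * X) (4 * X ^ 2)) (Rmax (2 * c + 4) (4 * C1 / eps))).
  pose proof (Rmax_r (Rmax (6 * X) (4 * X ^ 2)) (Rmax (2 * c + 4) (4 * C1 / eps))).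
  pose proof (Rmax_l (6 * X) (4 * X ^ 2)). pose proof (Rmax_r (6 * X) (4 * X ^ 2)).
  pose proof (Rmax_l (2 * c + 4) (4 * C1 / eps)). pose proof (Rmax_r (2 * c + 4) (4 * C1 / eps)).
  assert (Herr := I_integrand_error c a X Hc ltac:(lra) ltac:(lra) ltac:(lra) J G ltac:(lra) HJ HG).
  fold s p in Herr.
  replace (Rpower (12 * p) p / (3 * X)) with (C2 / X) in Herr by (unfold C2; field; lra).
  fold C1 in Herr.
  assert (C1 / a <= eps / 4) by (apply div_le_of_large; lra).
  assert (C2 / X <= eps / 4) by (apply div_le_of_large; lra).
  lra.
Qed.

Theorem I_shift_asymptotics (c : R) : -1 < c ->
  exists G : R, is_Gamma ((c + 1) / 2) G /\
  (exists A : R, forall alpha : R, A < alpha -> exists v : R, is_I alpha (alpha - c) v) /\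
  (forall eps : R, 0 < eps ->
    exists A : R, forall alpha v : R, A < alpha -> is_I alpha (alpha - c) v ->
      Rabs (Rpower alpha ((c + 1) / 2) * v - Rpower 6 ((c + 1) / 2) * G) < eps).
Proof.
  intros Hc. destruct (Gamma_integrable ((c + 1) / 2) ltac:(lra)) as [G HG].
  exists G. split; [| split].
  - exact (is_improper_int_pos_of_RInt_0_oo _ _ (continuous_pos_Gamma_integrand _) HG).
  - exists (2 * c + 4). intros a Ha.
    destruct (I_integrand_integrable c a Hc ltac:(lra) ltac:(lra)) as [J HJ].
    exists (2 * J). apply is_I_of_RInt_0_oo; [lra | exact HJ].
  - intros eps Heps. destruct (I_shift_limit c G Hc HG eps Heps) as [A HA].
    exists (Rmax A (2 * c + 4)). intros a v Ha Hv.
    pose proof (Rmax_l A (2 * c + 4)). pose proof (Rmax_r A (2 * c + 4)).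
    destruct (I_integrand_integrable c a Hc ltac:(lra) ltac:(lra)) as [J HJ].
    rewrite (is_I_unique _ _ _ _ HJ Hv).
    replace (Rpower a ((c + 1) / 2) * (2 * J)) with (2 * Rpower a ((c + 1) / 2) * J) by ring.
    apply HA; [lra | exact HJ].
Qed.

(** * The Gaussian integral *)

Definition gauss (t : R) := exp (- (t ^ 2)).

Definition gauss_RInt (x : R) := RInt gauss 0 x.

Definition gauss_aux (u t : R) := exp (- (u ^ 2 * (1 + t ^ 2))) / (1 + t ^ 2).

Definition gauss_aux_RInt (u : R) := RInt (gauss_aux u) 0 1.

Lemma continuous_gauss t : continuous gauss t.
Proof. apply continuous_R_of_ex_derive. unfold gauss. auto_derive. exact I. Qed.

Lemma ex_RInt_gauss a b : ex_RInt gauss a b.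
Proof. apply (ex_RInt_continuous (V := R_CompleteNormedModule)). intros; apply continuous_gauss. Qed.

Lemma gauss_bounds t : 0 < gauss t <= 1.
Proof.
  unfold gauss. split; [apply exp_pos |]. rewrite <- exp_0. apply exp_le.
  assert (0 <= t ^ 2) by (simpl; nra). lra.
Qed.

Lemma gauss_RInt_bounds x : 0 <= x -> 0 <= gauss_RInt x <= x.
Proof.
  intros Hx. unfold gauss_RInt. split.
  - apply RInt_ge_0; auto; [apply ex_RInt_gauss |]. intros t _. pose proof (gauss_bounds t). lra.
  - apply Rle_trans with (RInt (fun _ => 1) 0 x).
    + apply RInt_le; auto; [apply ex_RInt_gauss | apply ex_RInt_const |].
      intros t _. apply gauss_bounds.
    + rewrite RInt_const. change (scal (x - 0) 1) with ((x - 0) * 1). lra.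
Qed.

Lemma is_derive_gauss_RInt x : is_derive gauss_RInt x (gauss x).
Proof.
  apply (is_derive_RInt (V := R_CompleteNormedModule) gauss gauss_RInt 0 x).
  - apply filter_forall. intros b. apply RInt_correct, ex_RInt_gauss.
  - apply continuous_gauss.
Qed.

Lemma ex_RInt_gauss_aux u a b : ex_RInt (gauss_aux u) a b.
Proof.
  apply (ex_RInt_continuous (V := R_CompleteNormedModule)). intros t _.
  apply continuous_R_of_ex_derive. unfold gauss_aux. auto_derive.
  repeat split; nra.
Qed.

Lemma is_derive_gauss_aux_RInt x : is_derive gauss_aux_RInt x (-2 * gauss x * gauss_RInt x).
Proof.
  set (du := fun u v : R => -2 * u * exp (- (u * u * (1 + v * v)))).
  assert (Hdu : forall u t, is_derive (fun z => gauss_aux z t) u (du u t)).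
  { intros u t. unfold gauss_aux, du. auto_derive; [nra |].
    replace (u * (u * 1)) with (u * u) by ring. replace (t * (t * 1)) with (t * t) by ring.
    field. nra. }
  assert (Hint : RInt (fun t => du x t) 0 1 = -2 * gauss x * gauss_RInt x).
  { rewrite (RInt_ext_R _ (fun t => (-2 * gauss x) * (x * gauss (x * t + 0)))).
    2:{ intros t _. unfold du, gauss. cbv beta. replace (x * t + 0) with (x * t) by ring.
        replace (exp (- (x * x * (1 + t * t)))) with (exp (- (x ^ 2)) * exp (- ((x * t) ^ 2)))
          by (rewrite <- exp_plus; f_equal; ring).
        ring. }
    rewrite RInt_scal_R.
    2:{ apply (ex_RInt_continuous (V := R_CompleteNormedModule)). intros t _.
        apply continuous_R_of_ex_derive. unfold gauss. auto_derive. exact I. }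
    f_equal. unfold gauss_RInt. transitivity (RInt gauss (x * 0 + 0) (x * 1 + 0)).
    - exact (RInt_comp_lin (V := R_CompleteNormedModule) gauss x 0 0 1 (ex_RInt_gauss _ _)).
    - f_equal; ring. }
  rewrite <- Hint, <- (RInt_ext_R (fun t => Derive (fun u => gauss_aux u t) x))
    by (intros; apply is_derive_unique, Hdu).
  apply (is_derive_RInt_param gauss_aux 0 1 x).
  - apply filter_forall. intros y t _. eexists. apply Hdu.
  - intros t _. apply (continuity_2d_pt_ext du).
    { intros u v. symmetry. apply is_derive_unique, Hdu. }
    unfold du. apply continuity_2d_pt_mult.
    + apply continuity_2d_pt_mult; [apply continuity_2d_pt_const | apply continuity_2d_pt_id1].
    + apply (continuity_1d_2d_pt_comp exp (fun u v => - (u * u * (1 + v * v)))).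
      { apply derivable_continuous_pt, derivable_exp. }
      apply continuity_2d_pt_opp, continuity_2d_pt_mult.
      * apply continuity_2d_pt_mult; apply continuity_2d_pt_id1.
      * apply continuity_2d_pt_plus; [apply continuity_2d_pt_const |].
        apply continuity_2d_pt_mult; apply continuity_2d_pt_id2.
  - apply filter_forall. intros y. apply ex_RInt_gauss_aux.
Qed.

Lemma gauss_aux_RInt_0 : gauss_aux_RInt 0 = PI / 4.
Proof.
  unfold gauss_aux_RInt. rewrite (RInt_ext_R _ (fun t => / (1 + t ^ 2))).
  2:{ intros t _. unfold gauss_aux. replace (- (0 ^ 2 * (1 + t ^ 2))) with 0 by ring.
      rewrite exp_0. field. simpl. nra. }
  apply is_RInt_unique.
  replace (PI / 4) with (minus (atan 1) (atan 0))
    by (rewrite atan_1, atan_0; unfold minus, plus, opp; simpl; ring).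
  apply (is_RInt_derive (V := R_CompleteNormedModule) atan).
  - intros t _. apply is_derive_Reals, derivable_pt_lim_atan.
  - intros t _. apply continuous_R_of_ex_derive. auto_derive. nra.
Qed.

(* The classical trick: [x |-> gauss_RInt x ^ 2 + gauss_aux_RInt x] has derivative 0. *)
Lemma gauss_RInt_sq_add_aux x : 0 < x -> gauss_RInt x ^ 2 + gauss_aux_RInt x = PI / 4.
Proof.
  intros Hx. rewrite <- gauss_aux_RInt_0.
  assert (H0 : gauss_RInt 0 = 0) by apply (RInt_point (V := R_CompleteNormedModule)).
  replace (gauss_aux_RInt 0) with (gauss_RInt 0 ^ 2 + gauss_aux_RInt 0) by (rewrite H0; ring).
  symmetry. apply (eq_is_derive (V := R_NormedModule) (fun x => gauss_RInt x ^ 2 + gauss_aux_RInt x));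
    [| exact Hx].
  intros t _.
  replace (@zero R_NormedModule) with (plus (INR 2 * gauss t * gauss_RInt t ^ 1)
                                             (-2 * gauss t * gauss_RInt t))
    by (unfold plus, zero; simpl; ring).
  apply (is_derive_plus (fun x => gauss_RInt x ^ 2) gauss_aux_RInt).
  - apply is_derive_pow, is_derive_gauss_RInt.
  - apply is_derive_gauss_aux_RInt.
Qed.

Lemma gauss_aux_RInt_bounds x : 0 <= gauss_aux_RInt x <= gauss x.
Proof.
  assert (Hd : forall t, 1 <= 1 + t ^ 2) by (intros t; simpl; nra).
  unfold gauss_aux_RInt. split.
  - apply RInt_ge_0; [lra | apply ex_RInt_gauss_aux |]. intros t _. unfold gauss_aux.
    apply Rdiv_le_0_compat; [left; apply exp_pos | pose proof (Hd t); lra].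
  - apply Rle_trans with (RInt (fun _ => gauss x) 0 1).
    + apply RInt_le; [lra | apply ex_RInt_gauss_aux | apply ex_RInt_const |].
      intros t _. unfold gauss_aux, gauss. pose proof (Hd t).
      apply Rle_trans with (exp (- (x ^ 2 * (1 + t ^ 2)))).
      * unfold Rdiv. rewrite <- (Rmult_1_r (exp _)) at 2.
        apply Rmult_le_compat_l; [left; apply exp_pos |].
        rewrite <- Rinv_1. apply Rinv_le_contravar; lra.
      * apply exp_le. assert (0 <= x ^ 2) by (simpl; nra). nra.
    + rewrite RInt_const. change (scal (1 - 0) (gauss x)) with ((1 - 0) * gauss x). lra.
Qed.

Lemma abs_gauss_RInt_sub_le x : 0 < x -> Rabs (gauss_RInt x - sqrt PI / 2) <= 2 * gauss x.
Proof.
  intros Hx. pose proof (gauss_RInt_sq_add_aux x Hx). pose proof (gauss_aux_RInt_bounds x).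
  pose proof (gauss_RInt_bounds x ltac:(lra)). set (r := sqrt PI / 2) in *.
  assert (Hr : r * r = PI / 4).
  { unfold r. replace (sqrt PI / 2 * (sqrt PI / 2)) with (sqrt PI * sqrt PI / 4) by field.
    rewrite sqrt_sqrt; [reflexivity | pose proof PI_gt_3; lra]. }
  assert (Hr1 : 1 / 2 <= r).
  { unfold r. assert (1 <= sqrt PI); [| lra]. rewrite <- sqrt_1.
    apply sqrt_le_1_alt. pose proof PI_gt_3. lra. }
  assert ((gauss_RInt x - r) * (gauss_RInt x + r) = - gauss_aux_RInt x) by (simpl in *; nra).
  apply Rabs_le. split; nra.
Qed.

Lemma is_RInt_0_oo_gauss : is_RInt_0_oo gauss (sqrt PI / 2).
Proof.
  intros eps Heps. exists (eps / 2), (Rmax 1 (4 / eps)). split; [lra |]. intros e M He HM.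
  assert (HM1 : 1 < M) by (pose proof (Rmax_l 1 (4 / eps)); lra).
  assert (HM2 : 4 / eps < M) by (pose proof (Rmax_r 1 (4 / eps)); lra).
  assert (HeM : gauss_RInt e + RInt gauss e M = gauss_RInt M)
    by (unfold gauss_RInt; apply RInt_Chasles_R; apply ex_RInt_gauss).
  pose proof (abs_gauss_RInt_sub_le M ltac:(lra)) as HlimM.
  assert (Hg : gauss M <= / M).
  { unfold gauss. rewrite exp_Ropp. apply Rinv_le_contravar; [lra |].
    pose proof (exp_ineq1_le (M ^ 2)). simpl in *. nra. }
  assert (Hme : 2 * / M < eps / 2).
  { apply (Rmult_lt_reg_r M); [lra |]. rewrite Rmult_assoc, Rinv_l, Rmult_1_r by lra.
    apply (Rmult_lt_compat_l (eps / 2)) in HM2; [| lra].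
    replace (eps / 2 * (4 / eps)) with 2 in HM2 by (field; lra). lra. }
  pose proof (gauss_RInt_bounds e ltac:(lra)).
  replace (RInt gauss e M - sqrt PI / 2) with ((gauss_RInt M - sqrt PI / 2) - gauss_RInt e) by lra.
  pose proof (Rle_abs (gauss_RInt M - sqrt PI / 2)).
  pose proof (Rle_abs (- (gauss_RInt M - sqrt PI / 2))). rewrite Rabs_Ropp in *.
  apply Rabs_def1; lra.
Qed.

Lemma Gamma_half G : is_RInt_0_oo (Gamma_integrand ((0 + 1) / 2)) G -> G = sqrt PI.
Proof.
  intros HG. pose proof (is_RInt_0_oo_gauss_power 0 1 G Rlt_0_1 HG) as H.
  replace (gauss_power 0 1) with gauss in H.
  2:{ apply functional_extensionality. intros t.
      unfold gauss, gauss_power. rewrite Rpower_0_r, Rmult_1_l, Rmult_1_l. reflexivity. }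
  rewrite Rpower_1_l in H. pose proof (is_RInt_0_oo_unique _ _ _ H is_RInt_0_oo_gauss). lra.
Qed.

Theorem mainTheorem5 :
  (forall c : R, -1 < c ->
    exists G : R, is_Gamma ((c + 1) / 2) G /\
    (exists A : R, forall alpha : R, A < alpha ->
        exists v : R, is_I alpha (alpha - c) v) /\
    (forall eps : R, 0 < eps ->
      exists A : R, forall alpha v : R, A < alpha ->
        is_I alpha (alpha - c) v ->
        Rabs (Rpower alpha ((c + 1) / 2) * v - Rpower 6 ((c + 1) / 2) * G) < eps))
  /\
  ((exists A : R, forall alpha : R, A < alpha -> exists v : R, is_I alpha alpha v) /\
   (forall eps : R, 0 < eps ->
      exists A : R, forall alpha v : R, A < alpha -> is_I alpha alpha v ->
        Rabs (sqrt alpha * v - sqrt (6 * PI)) < eps)).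
Proof.
  split; [exact I_shift_asymptotics |].
  destruct (I_shift_asymptotics 0 ltac:(lra)) as [G [HG [[A1 HA1] Hlim]]].
  apply is_RInt_0_oo_of_improper, Gamma_half in HG. subst G.
  replace ((0 + 1) / 2) with (/ 2) in Hlim by field.
  split.
  - exists A1. intros a Ha. destruct (HA1 a Ha) as [v Hv]. rewrite Rminus_0_r in Hv. now exists v.
  - intros eps Heps. destruct (Hlim eps Heps) as [A2 HA2]. exists (Rmax A2 0).
    intros a v Ha Hv. pose proof (Rmax_l A2 0). pose proof (Rmax_r A2 0).
    rewrite <- (Rminus_0_r a) in Hv at 2. specialize (HA2 a v ltac:(lra) Hv).
    rewrite !Rpower_sqrt in HA2 by lra.
    rewrite sqrt_mult by (pose proof PI_gt_3; lra). exact HA2.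
Qed.
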